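(* Let $(\Omega(\mathcal{A}),\mathrm{d},\bar{\mathrm{d}})$ be a bidifferential graded algebra and $M,N\ge1$. Let $P$ be an $N\times N$ matrix over $\mathcal{A}$, let $K$ be an $N\times M$ matrix over $\mathcal{A}$ with $\mathrm{d}K=\bar{\mathrm{d}}K=0$, and let $X'$ ($N\times N$) and $Y'$ ($M\times N$) be matrices over $\mathcal{A}$ with $$\bar{\mathrm{d}}X'=(\mathrm{d}X')P,\qquad \bar{\mathrm{d}}Y'=(\mathrm{d}Y')P .$$ (a) Let $R$ ($N\times N$) and $L$ ($M\times M$) be matrices over $\mathcal{A}$ with $\mathrm{d}R=\mathrm{d}L=0$, and suppose $L\,Y'=Y'\,P$ and $R\,X'=X'\,P$. If $X'-KY'$ is invertible, then $\Phi=Y'(X'-KY')^{-1}$ satisfies $\bar{\mathrm{d}}\,\mathrm{d}\,\Phi=(\mathrm{d}\Phi)\,Q\,(\mathrm{d}\Phi)$ with $Q=RK-KL$. (b) Suppose $M=N$, let $L$ be an $N\times N$ matrix over $\mathcal{A}$ with $\mathrm{d}L=0$, and suppose $L\,Y'=Y'\,P$ and $L\,X'+Y'=X'\,P$. If $X'-KY'$ is invertible, then $\Phi=Y'(X'-KY')^{-1}$ satisfies $\bar{\mathrm{d}}\,\mathrm{d}\,\Phi=(\mathrm{d}\Phi)\,Q\,(\mathrm{d}\Phi)$ with $Q=I+[L,K]=I+LK-KL$.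
   Context: $\mathcal{A}$ is a unital associative algebra over $\mathbb{C}$ with identity $I$. A bidifferential graded algebra $(\Omega(\mathcal{A}),\mathrm{d},\bar{\mathrm{d}})$ consists of a graded associative algebra $\Omega(\mathcal{A})=\bigoplus_{r\ge 0}\Omega^r(\mathcal{A})$ with $\Omega^0(\mathcal{A})=\mathcal{A}$ (each $\Omega^r(\mathcal{A})$ an $\mathcal{A}$-bimodule) together with two linear maps $\mathrm{d},\bar{\mathrm{d}}:\Omega^r(\mathcal{A})\to\Omega^{r+1}(\mathcal{A})$ satisfying the graded Leibniz rule $\mathrm{d}(\alpha\beta)=(\mathrm{d}\alpha)\beta+(-1)^r\alpha\,\mathrm{d}\beta$ for $\alpha\in\Omega^r(\mathcal{A})$ (and likewise for $\bar{\mathrm{d}}$), and $\mathrm{d}^2=\bar{\mathrm{d}}^2=0$, $\mathrm{d}\bar{\mathrm{d}}+\bar{\mathrm{d}}\mathrm{d}=0$. The maps $\mathrm{d},\bar{\mathrm{d}}$ are applied entrywise to matrices with entries in $\Omega(\mathcal{A})$, and products of such matrices use the matrix product together with the product of $\Omega(\mathcal{A})$. In (b), $I$ denotes the $N\times N$ identity matrix. *)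

From HB Require Import structures.
From mathcomp Require Import all_boot all_order all_algebra.
Set Implicit Arguments. Unset Strict Implicit. Unset Printing Implicit Defensive.
Import GRing.Theory.
Local Open Scope ring_scope.

(* A graded associative unital algebra Omega = (+)_{r>=0} Omega^r is modelled
   by a ring [Om] (the total algebra) together with the family of homogeneous
   components [deg r : pred Om] (Omega^r).  The algebra A is Omega^0. *)
Definition is_graded (Om : nzRingType) (deg : nat -> pred Om) : Prop :=
  [/\ (forall r, deg r 0) /\
      (forall r x y, deg r x -> deg r y -> deg r (x + y)),
      (forall r x, deg r x -> deg r (- x)),
      deg 0%N 1 /\
      (forall r s x y, deg r x -> deg s y -> deg (r + s)%N (x * y)),
      (forall x : Om, exists (n : nat) (f : nat -> Om),
          (forall i, deg i (f i)) /\ x = \sum_(i < n) f i) &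
      (forall (n : nat) (f : nat -> Om), (forall i, deg i (f i)) ->
          \sum_(i < n) f i = 0 -> forall i, (i < n)%N -> f i = 0)].

Definition is_graded_derivation (Om : nzRingType) (deg : nat -> pred Om)
    (d : Om -> Om) : Prop :=
  [/\ (forall x y, d (x + y) = d x + d y),
      (forall r x, deg r x -> deg r.+1 (d x)) &
      (forall r a b, deg r a -> d (a * b) = d a * b + (-1) ^+ r * (a * d b))].

Definition is_bdga (Om : nzRingType) (deg : nat -> pred Om)
    (d db : Om -> Om) : Prop :=
  [/\ is_graded deg, is_graded_derivation deg d, is_graded_derivation deg db,
      (forall x, d (d x) = 0) /\ (forall x, db (db x) = 0) &
      (forall x, d (db x) + db (d x) = 0)].

Definition mx_over0 (Om : nzRingType) (deg : nat -> pred Om) (m n : nat)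
    (X : 'M[Om]_(m, n)) : Prop := forall i j, deg 0%N (X i j).

Definition dmx (Om : nzRingType) (d : Om -> Om) (m n : nat)
    (X : 'M[Om]_(m, n)) : 'M[Om]_(m, n) := map_mx d X.

From HB Require Import structures.
From mathcomp Require Import all_boot all_order all_algebra.
Import GRing.Theory.
Local Open Scope ring_scope.
Set Implicit Arguments. Unset Strict Implicit. Unset Printing Implicit Defensive.

(* Both parts of the corollary are instances of one "dressing" theorem: if an
   invertible degree-0 matrix X with inverse Z and a matrix Y satisfy
     dbar X = (d X) P,   dbar Y = (d Y) P,   X P = R X + Q Y,   d R = d Q = 0,
   then Phi = Y Z solves  dbar d Phi = (d Phi) Q (d Phi).
   Its proof is a direct computation: writing D = d Phi, the identity Phi X = Y
   gives d Y = D X + Phi d X and dbar Phi = D X P Z; applying dbar to the first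
   identity, using dbar d Y = d Y d P (and likewise for X) and the derivative
   X d P + (d X) P = R d X + Q d Y of the linear relation, everything cancels
   down to (dbar D) X = D Q D X, and X is cancelled by Z. *)

Section GradedMatrices.
Variables (Om : nzRingType) (deg : nat -> pred Om).
Hypothesis graded : is_graded deg.

Definition mx_deg r m n (A : 'M[Om]_(m, n)) : Prop := forall i j, deg r (A i j).

Lemma deg_sum r n (F : 'I_n -> Om) :
  (forall i, deg r (F i)) -> deg r (\sum_(i < n) F i).
Proof.
case: graded => [[deg0 degD] _ _ _ _] degF.
by apply: (big_ind (deg r)) => // x y; apply: degD.
Qed.

Lemma mx_degD r m n (A B : 'M[Om]_(m, n)) :
  mx_deg r A -> mx_deg r B -> mx_deg r (A + B).
Proof. by case: graded => [[_ degD] _ _ _ _] hA hB i j; rewrite mxE; apply: degD. Qed.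

Lemma mx_degB r m n (A B : 'M[Om]_(m, n)) :
  mx_deg r A -> mx_deg r B -> mx_deg r (A - B).
Proof.
case: graded => _ degN _ _ _ hA hB; apply: mx_degD => // i j.
by rewrite mxE; apply: degN.
Qed.

Lemma mx_degM r s m n p (A : 'M[Om]_(m, n)) (B : 'M[Om]_(n, p)) :
  mx_deg r A -> mx_deg s B -> mx_deg (r + s)%N (A *m B).
Proof.
case: graded => _ _ [_ degM] _ _ hA hB i j.
by rewrite mxE; apply: deg_sum => k; apply: degM.
Qed.

Lemma mx_deg1 n : mx_deg 0 (1%:M : 'M[Om]_n).
Proof.
case: graded => [[deg0 _] _ [deg1 _] _ _] i j.
by rewrite mxE; case: (i == j).
Qed.

End GradedMatrices.

Section MatrixDerivation.
Variables (Om : nzRingType) (deg : nat -> pred Om) (d : Om -> Om).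
Hypothesis graded : is_graded deg.
Hypothesis der : is_graded_derivation deg d.

Lemma der_additive : {morph d : x y / x + y}.
Proof. by case: der. Qed.

Lemma der0 : d 0 = 0.
Proof. by apply: (addIr (d 0)); rewrite -der_additive !add0r. Qed.

Lemma dmxD m n (A B : 'M[Om]_(m, n)) : dmx d (A + B) = dmx d A + dmx d B.
Proof. by apply/matrixP => i j; rewrite !mxE der_additive. Qed.

Lemma dmxB m n (A B : 'M[Om]_(m, n)) : dmx d (A - B) = dmx d A - dmx d B.
Proof.
have derN x : d (- x) = - d x.
  by apply: (addrI (d x)); rewrite -der_additive !subrr der0.
by rewrite dmxD; congr (_ + _); apply/matrixP => i j; rewrite !mxE derN.
Qed.

Lemma mx_deg_dmx r m n (A : 'M[Om]_(m, n)) :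
  mx_deg deg r A -> mx_deg deg r.+1 (dmx d A).
Proof. by case: der => _ degS _ hA i j; rewrite mxE; apply: degS. Qed.

Lemma dmxM r m n p (A : 'M[Om]_(m, n)) (B : 'M[Om]_(n, p)) : mx_deg deg r A ->
  dmx d (A *m B) = dmx d A *m B + (-1) ^+ r *: (A *m dmx d B).
Proof.
case: der => _ _ leibniz hA; apply/matrixP => i j.
rewrite !mxE (big_morph d der_additive der0) mulr_sumr -big_split.
by apply: eq_bigr => k _; rewrite !mxE (leibniz _ _ _ (hA i k)).
Qed.

Lemma dmxM0 m n p (A : 'M[Om]_(m, n)) (B : 'M[Om]_(n, p)) : mx_deg deg 0 A ->
  dmx d (A *m B) = dmx d A *m B + A *m dmx d B.
Proof. by move/dmxM->; rewrite expr0 scale1r. Qed.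

Lemma dmxM1 m n p (A : 'M[Om]_(m, n)) (B : 'M[Om]_(n, p)) : mx_deg deg 1 A ->
  dmx d (A *m B) = dmx d A *m B - A *m dmx d B.
Proof. by move/dmxM->; rewrite expr1 scaleN1r. Qed.

Lemma dmxM_const m n p (A : 'M[Om]_(m, n)) (B : 'M[Om]_(n, p)) :
  mx_deg deg 0 A -> dmx d A = 0 -> dmx d B = 0 -> dmx d (A *m B) = 0.
Proof. by move=> hA dA dB; rewrite dmxM0 // dA dB mul0mx mulmx0 addr0. Qed.

Lemma dmx1 n : dmx d (1%:M : 'M[Om]_n) = 0.
Proof.
case: der => _ _ leibniz; case: graded => _ _ [deg1 _] _ _.
have d1 : d 1 = 0.
  have := leibniz 0%N 1 1 deg1; rewrite !mulr1 expr0 !mul1r => d1_twice.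
  by apply: (addIr (d 1)); rewrite add0r -d1_twice.
by apply/matrixP => i j; rewrite !mxE; case: (i == j); rewrite ?d1 ?der0.
Qed.

End MatrixDerivation.

Section Bidifferential.
Variables (Om : nzRingType) (deg : nat -> pred Om) (d db : Om -> Om).
Hypothesis bdga : is_bdga deg d db.

Let graded : is_graded deg. Proof. by case: bdga. Qed.
Let der_d : is_graded_derivation deg d. Proof. by case: bdga. Qed.
Let der_db : is_graded_derivation deg db. Proof. by case: bdga. Qed.

Lemma dmx_dd m n (A : 'M[Om]_(m, n)) : dmx d (dmx d A) = 0.
Proof. by case: bdga => _ _ _ [dd _] _; apply/matrixP => i j; rewrite !mxE dd. Qed.

Lemma dmx_anticomm m n (A : 'M[Om]_(m, n)) : dmx db (dmx d A) = - dmx d (dmx db A).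
Proof.
case: bdga => _ _ _ _ anti; apply/matrixP => i j; rewrite !mxE.
by apply/eqP; rewrite -addr_eq0 addrC anti.
Qed.

Lemma dbar_d_flow m n (A : 'M[Om]_(m, n)) (P : 'M[Om]_n) : mx_deg deg 0 A ->
  dmx db A = dmx d A *m P -> dmx db (dmx d A) = dmx d A *m dmx d P.
Proof.
move=> hA flowA; have hdA := mx_deg_dmx der_d hA.
by rewrite dmx_anticomm flowA (dmxM1 der_d _ hdA) dmx_dd mul0mx sub0r opprK.
Qed.

Lemma flow_sub m n p (X : 'M[Om]_(m, n)) (K : 'M[Om]_(m, p)) (Y : 'M[Om]_(p, n))
    (P : 'M[Om]_n) :
  mx_deg deg 0 K -> dmx d K = 0 -> dmx db K = 0 ->
  dmx db X = dmx d X *m P -> dmx db Y = dmx d Y *m P ->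
  dmx db (X - K *m Y) = dmx d (X - K *m Y) *m P.
Proof.
move=> hK dK dbK flowX flowY.
rewrite (dmxB der_db) (dmxM0 der_db _ hK) (dmxB der_d) (dmxM0 der_d _ hK).
by rewrite dK dbK !mul0mx !add0r flowX flowY mulmxBl mulmxA.
Qed.

Lemma mulmx_rcancel m n (A B : 'M[Om]_(m, n)) (X Z : 'M[Om]_n) :
  X *m Z = 1%:M -> A *m X = B *m X -> A = B.
Proof. by move=> XZ AB; rewrite -[A]mulmx1 -[B]mulmx1 -XZ !mulmxA AB. Qed.

Section Dressing.
Variables (M N : nat) (X P R Z : 'M[Om]_N) (Y : 'M[Om]_(M, N)) (Q : 'M[Om]_(N, M)).
Hypotheses (hX : mx_deg deg 0 X) (hY : mx_deg deg 0 Y) (hZ : mx_deg deg 0 Z).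
Hypotheses (hR : mx_deg deg 0 R) (hQ : mx_deg deg 0 Q).
Hypotheses (flowX : dmx db X = dmx d X *m P) (flowY : dmx db Y = dmx d Y *m P).
Hypotheses (relXY : X *m P = R *m X + Q *m Y) (dR : dmx d R = 0) (dQ : dmx d Q = 0).
Hypotheses (ZX : Z *m X = 1%:M) (XZ : X *m Z = 1%:M).

Let Phi := Y *m Z.
Let D := dmx d Phi.

Let hPhi : mx_deg deg 0 Phi. Proof. exact: (mx_degM graded hY hZ). Qed.

Let PhiX : Phi *m X = Y. Proof. by rewrite -mulmxA ZX mulmx1. Qed.

Let dY_split : dmx d Y = D *m X + Phi *m dmx d X.
Proof. by rewrite -PhiX (dmxM0 der_d _ hPhi). Qed.

Let d_relXY : dmx d X *m P + X *m dmx d P = R *m dmx d X + Q *m dmx d Y.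
Proof.
rewrite -(dmxM0 der_d _ hX) relXY (dmxD der_d).
by rewrite (dmxM0 der_d _ hR) (dmxM0 der_d _ hQ) dR dQ !mul0mx !add0r.
Qed.

Let dbar_Phi : dmx db Phi = D *m X *m P *m Z.
Proof.
apply: (mulmx_rcancel XZ); rewrite -!mulmxA ZX mulmx1 mulmxA.
apply: (addIr (Phi *m dmx db X)); rewrite -(dmxM0 der_db _ hPhi) PhiX.
by rewrite flowY flowX mulmxA -mulmxDl -dY_split.
Qed.

Lemma dressing : dmx db D = D *m Q *m D.
Proof.
have hD : mx_deg deg 1 D := mx_deg_dmx der_d hPhi.
(* Apply dbar to d Y = D X + Phi d X. *)
have dbar_dY : dmx d Y *m dmx d P = dmx db D *m X - D *m (dmx d X *m P)
    + D *m X *m P *m Z *m dmx d X + Phi *m (dmx d X *m dmx d P).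
  rewrite -(dbar_d_flow hY flowY) dY_split (dmxD der_db).
  rewrite (dmxM1 der_db _ hD) (dmxM0 der_db _ hPhi) dbar_Phi.
  by rewrite flowX (dbar_d_flow hX flowX) addrA.
have dbarD_X : dmx db D *m X
    = D *m (dmx d X *m P + X *m dmx d P) - D *m X *m P *m Z *m dmx d X.
  move: dbar_dY; rewrite dY_split mulmxDl -!mulmxA => /addIr DXdP.
  by rewrite mulmxDr DXdP addrA addrK addrC subrK.
apply: (mulmx_rcancel XZ).
rewrite dbarD_X d_relXY -(mulmxA D X P) relXY.
have relZ : (R *m X + Q *m Y) *m Z = R + Q *m Phi.
  by rewrite mulmxDl -!mulmxA XZ mulmx1.
have cancelR : R *m dmx d X + Q *m dmx d Y - (R + Q *m Phi) *m dmx d X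
    = Q *m (D *m X).
  rewrite mulmxDl opprD addrACA subrr add0r -mulmxA -mulmxBr.
  by rewrite dY_split addrK.
by rewrite -(mulmxA D _ Z) relZ -mulmxA -mulmxBr cancelR !mulmxA.
Qed.

End Dressing.
End Bidifferential.

Lemma relation_a (T : pzRingType) (M N : nat) (P R X' : 'M[T]_N) (L : 'M[T]_M)
    (K : 'M[T]_(N, M)) (Y' : 'M[T]_(M, N)) :
  L *m Y' = Y' *m P -> R *m X' = X' *m P ->
  (X' - K *m Y') *m P = R *m (X' - K *m Y') + (R *m K - K *m L) *m Y'.
Proof.
move=> LY RX; rewrite mulmxBl -mulmxA -LY -RX mulmxBr mulmxBl !mulmxA.
by rewrite addrA subrK.
Qed.

Lemma relation_b (T : pzRingType) (N : nat) (P L X K Y : 'M[T]_N) :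
  L *m Y = Y *m P -> L *m X + Y = X *m P ->
  (X - K *m Y) *m P = L *m (X - K *m Y) + (1%:M + L *m K - K *m L) *m Y.
Proof.
move=> LY LXY; rewrite mulmxBl -mulmxA -LY -LXY mulmxBr !mulmxDl mul1mx mulNmx.
by rewrite !mulmxA !addrA (addrAC (L *m X) _ Y) subrK.
Qed.

Theorem corollary1 (Om : nzRingType) (deg : nat -> pred Om) (d db : Om -> Om)
  (M N : nat) (P : 'M[Om]_(N, N)) (K : 'M[Om]_(N, M))
  (X' : 'M[Om]_(N, N)) (Y' : 'M[Om]_(M, N)) :
  is_bdga deg d db -> (0 < M)%N -> (0 < N)%N ->
  mx_over0 deg P -> mx_over0 deg K -> mx_over0 deg X' -> mx_over0 deg Y' ->
  dmx d K = 0 -> dmx db K = 0 ->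
  dmx db X' = dmx d X' *m P -> dmx db Y' = dmx d Y' *m P ->
  (* (a) *)
  (forall (R : 'M[Om]_(N, N)) (L : 'M[Om]_(M, M)),
     mx_over0 deg R -> mx_over0 deg L ->
     dmx d R = 0 -> dmx d L = 0 ->
     L *m Y' = Y' *m P -> R *m X' = X' *m P ->
     forall Z : 'M[Om]_(N, N), mx_over0 deg Z ->
       Z *m (X' - K *m Y') = 1%:M -> (X' - K *m Y') *m Z = 1%:M ->
       let Phi := Y' *m Z in
       let Q := R *m K - K *m L in
       dmx db (dmx d Phi) = dmx d Phi *m Q *m dmx d Phi)
  /\
  (* (b) *)
  (forall (eMN : M = N) (L : 'M[Om]_(N, N)),
     mx_over0 deg L -> dmx d L = 0 ->
     let Y : 'M[Om]_(N, N) := castmx (eMN, erefl N) Y' in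
     let KN : 'M[Om]_(N, N) := castmx (erefl N, eMN) K in
     L *m Y = Y *m P -> L *m X' + Y = X' *m P ->
     forall Z : 'M[Om]_(N, N), mx_over0 deg Z ->
       Z *m (X' - KN *m Y) = 1%:M -> (X' - KN *m Y) *m Z = 1%:M ->
       let Phi := Y *m Z in
       let Q := 1%:M + L *m KN - KN *m L in
       dmx db (dmx d Phi) = dmx d Phi *m Q *m dmx d Phi).
Proof.
move=> bdga _ _ hP hK hX' hY' dK dbK flowX' flowY'.
have graded : is_graded deg by case: bdga.
have der_d : is_graded_derivation deg d by case: bdga.
have hX : mx_deg deg 0 (X' - K *m Y') := mx_degB graded hX' (mx_degM graded hK hY').
have flowX : dmx db (X' - K *m Y') = dmx d (X' - K *m Y') *m P.
  exact: (flow_sub bdga hK dK dbK flowX' flowY').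
split.
  move=> R L hR hL dR dL LY RX Z hZ ZX XZ /=.
  have hQ : mx_deg deg 0 (R *m K - K *m L) :=
    mx_degB graded (mx_degM graded hR hK) (mx_degM graded hK hL).
  apply: (dressing bdga hX hY' hZ hR hQ flowX flowY') => //.
  - exact: relation_a.
  - by rewrite (dmxB der_d) !(dmxM_const der_d) // subrr.
move=> eMN; subst M => L hL dL /=; rewrite !castmx_id => LY LXY Z hZ ZX XZ.
have hQ : mx_deg deg 0 (1%:M + L *m K - K *m L) :=
  mx_degB graded (mx_degD graded (mx_deg1 graded (n := N)) (mx_degM graded hL hK))
    (mx_degM graded hK hL).
apply: (dressing bdga hX hY' hZ hL hQ flowX flowY') => //.
- exact: relation_b.
- rewrite (dmxB der_d) (dmxD der_d) (dmx1 graded der_d).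
  by rewrite !(dmxM_const der_d) // add0r subrr.
Qed.
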